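(* If the standing assumptions (listed in the context) hold, then Algorithm SLBFGS is well-defined and the sequence $(\mathcal{J}(x_k))$ is strictly monotonically decreasing and convergent.
   Context: Let $\mathcal{X}$ be a Hilbert space and $\mathcal{J}:\mathcal{X}\to\mathbb{R}$. Algorithm SLBFGS (structured inverse L-BFGS): inputs $x_0\in\mathcal{X}$, $\epsilon\geq0$, $\ell\in\mathbb{N}_0$, $c_0\geq 0$, $C_0\in[c_0,\infty]$, $c_s,c_1,c_2>0$; let $\tau_0>0$. For $k=0,1,2,\ldots$: let $m=\max\{0,k-\ell\}$; choose a symmetric positive semi-definite bounded linear operator $S_k$; set $B_k^{(0)}=\tau_k I+S_k$; let $B_k$ be obtained from $B_k^{(0)}$ and the currently stored pairs $(s_j,y_j)$, $m\le j\le k-1$, by successive L-BFGS updates $B\mapsto B+\frac{yy^T}{y^Ts}-\frac{Bss^TB}{s^TBs}$; set $d_k=-B_k^{-1}\nabla\mathcal{J}(x_k)$; compute a step length $\alpha_k>0$ by a line search; set $s_k=\alpha_kd_k$, $x_{k+1}=x_k+s_k$, $y_k=\nabla\mathcal{J}(x_{k+1})-\nabla\mathcal{J}(x_k)$; store $(s_k,y_k)$ only if $y_k^Ts_k>c_s\|s_k\|^2$; if $k\ge\ell$ remove $(s_m,y_m)$ from storage; stop with output $x_{k+1}$ if $\|\nabla\mathcal{J}(x_{k+1})\|\le\epsilon$; set $z_k=y_k-S_{k+1}s_k$, $\omega^l_{k+1}=\min\{c_0,c_1\|\nabla\mathcal{J}(x_{k+1})\|^{c_2}\}$, $\omega^u_{k+1}=\max\{C_0,(c_1\|\nabla\mathcal{J}(x_{k+1})\|^{c_2})^{-1}\}$;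 with $P(t)=\min\{\max\{t,\omega^l_{k+1}\},\omega^u_{k+1}\}$ and $\rho=z_k^Ts_k$ let $\tau^s=P(\rho/\|s_k\|^2)$, $\tau^g=P(\|z_k\|/\|s_k\|)$, $\tau^z=P(\|z_k\|^2/\rho)$; if $\rho>0$ choose $\tau_{k+1}\in[\tau^s,\tau^z]$, else choose $\tau_{k+1}\in[\tau^s,\tau^g]$. Line searches: Armijo with backtracking means, for fixed $\beta,\sigma\in(0,1)$, $\alpha_k$ is the largest number in $\{1,\beta,\beta^2,\ldots\}$ with $\mathcal{J}(x_{k+1})\le\mathcal{J}(x_k)+\alpha_k\sigma\nabla\mathcal{J}(x_k)^Td_k$; the Wolfe–Powell conditions are this Armijo inequality together with $\nabla\mathcal{J}(x_{k+1})^Td_k\ge\eta\nabla\mathcal{J}(x_k)^Td_k$ for fixed $\eta\in(\sigma,1)$. Standing assumptions: 1) $\mathcal{J}$ is continuously differentiable and bounded below; 2) the step sizes consistently satisfy the Armijo condition computed by backtracking, or consistently satisfy the Wolfe–Powell conditions; 3) $c_0=0$ is only chosen if with this choice $B_k$ is symmetric positive definite for all $k$ (e.g. if every $S_k$ is symmetric positive definite). *)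

From HB Require Import structures.
From mathcomp Require Import all_boot all_order all_algebra.
From mathcomp Require Import all_classical all_reals all_analysis.
Set Implicit Arguments. Unset Strict Implicit. Unset Printing Implicit Defensive.
Import Order.TTheory GRing.Theory Num.Theory.
Import numFieldNormedType.Exports.
Local Open Scope ring_scope.

Section SLBFGS.
Variables (R : realType) (X : normedModType R) (inner : X -> X -> R).

(* [inner] is an inner product on X inducing the norm of X;
   together with completeness of X this makes X a real Hilbert space. *)
Definition is_inner_product : Prop :=
  [/\ forall u v, inner u v = inner v u,
      forall a u v w, inner (a *: u + v) w = a * inner u w + inner v w
    & forall v, inner v v = `|v| ^+ 2].

Definition is_C1_with_gradient (J : X -> R) (g : X -> X) : Prop :=
  (forall x, differentiable J x /\ forall h, 'd J x h = inner (g x) h)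
  /\ continuous g.

Definition sym_psd_bounded (S : X -> X) : Prop :=
  [/\ forall a u v, S (a *: u + v) = a *: S u + S v,
      exists M : R, forall v, `|S v| <= M * `|v|,
      forall u v, inner (S u) v = inner u (S v)
    & forall v, 0 <= inner (S v) v].

Definition spd_bounded (B : X -> X) : Prop :=
  sym_psd_bounded B /\
  exists mu : R, 0 < mu /\ forall v, mu * `|v| ^+ 2 <= inner (B v) v.

(* one L-BFGS (BFGS) update  B + y y^T/(y^T s) - B s s^T B/(s^T B s) *)
Definition bfgs_update (B : X -> X) (s y : X) : X -> X :=
  fun v => B v + (inner y v / inner y s) *: y
               - (inner s (B v) / inner s (B s)) *: B s.

Fixpoint chain_ok (B : X -> X) (l : seq (X * X)) : Prop :=
  match l with
  | [::] => True
  | (s, y) :: l' => 0 < inner y s /\ 0 < inner s (B s)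
                    /\ chain_ok (bfgs_update B s y) l'
  end.

Definition apply_updates (B : X -> X) (l : seq (X * X)) : X -> X :=
  foldl (fun B p => bfgs_update B p.1 p.2) B l.

Variables (J : X -> R) (g : X -> X).

Inductive line_search :=
  | ArmijoBacktracking of R & R
  | WolfePowell of R & R.

Definition ls_params_ok (ls : line_search) : Prop :=
  match ls with
  | ArmijoBacktracking beta sigma => 0 < beta < 1 /\ 0 < sigma < 1
  | WolfePowell sigma eta => 0 < sigma /\ sigma < eta /\ eta < 1
  end.

Definition armijo (sigma : R) (x d : X) (a : R) : Prop :=
  J (x + a *: d) <= J x + a * sigma * inner (g x) d.

Definition ls_ok (ls : line_search) (x d : X) (a : R) : Prop :=
  match ls with
  | ArmijoBacktracking beta sigma =>
      exists i : nat, a = beta ^+ i /\ armijo sigma x d a /\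
        forall j : nat, (j < i)%N -> ~ armijo sigma x d (beta ^+ j)
  | WolfePowell sigma eta =>
      0 < a /\ armijo sigma x d a /\
      eta * inner (g x) d <= inner (g (x + a *: d)) d
  end.

Variables (eps : R) (ell : nat) (c0 : R) (C0 : \bar R) (cs c1 c2 : R)
          (ls : line_search).

(* safeguarding of tau_{k+1}; gnext = grad J(x_{k+1}) *)
Definition omega_l (gnext : X) : R :=
  Num.min c0 (c1 * `|gnext| `^ c2).
Definition omega_u (gnext : X) : \bar R :=
  Order.max C0 ((c1 * `|gnext| `^ c2)^-1)%:E.
Definition proj_tau (gnext : X) (t : R) : R :=
  fine (Order.min (Num.max t (omega_l gnext))%:E (omega_u gnext)).

(* admissible choices of tau_{k+1}, given s_k, y_k, S_{k+1}, grad J(x_{k+1}) *)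
Definition tau_admissible (s y : X) (Snext : X -> X) (gnext : X) (t : R)
  : Prop :=
  let z := y - Snext s in
  let rho := inner z s in
  let tau_s := proj_tau gnext (rho / `|s| ^+ 2) in
  let tau_g := proj_tau gnext (`|z| / `|s|) in
  let tau_z := proj_tau gnext (`|z| ^+ 2 / rho) in
  if 0 < rho then tau_s <= t <= tau_z else tau_s <= t <= tau_g.

Variables (x : nat -> X) (S : nat -> X -> X) (tau alpha : nat -> R)
          (d : nat -> X).

Definition s_ (k : nat) : X := x k.+1 - x k.
Definition y_ (k : nat) : X := g (x k.+1) - g (x k).

(* pairs stored at the start of iteration k, in increasing order of j:
   j in [m, k-1], m = max{0, k - ell}, with the curvature test *)
Definition stored_pairs (k : nat) : seq (X * X) :=
  let m := (k - ell)%N in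
  [seq (s_ j, y_ j) | j <- iota m (k - m) & cs * `|s_ j| ^+ 2 < inner (y_ j) (s_ j)].

Definition B0_ (k : nat) : X -> X := fun v => tau k *: v + S k v.
Definition B_ (k : nat) : X -> X := apply_updates (B0_ k) (stored_pairs k).

Definition iter_ok (k : nat) : Prop :=
  [/\ B_ k (d k) = - g (x k), ls_ok ls (x k) (d k) (alpha k)
    & x k.+1 = x k + alpha k *: d k].

(* state at the beginning of iteration N: iterations 0..N-1 were carried out,
   none of them stopped, and S_0..S_N, tau_0..tau_N were chosen as required *)
Definition run_prefix (N : nat) : Prop :=
  [/\ 0 < tau 0,
      forall k, (k <= N)%N -> sym_psd_bounded (S k)
    & forall k, (k < N)%N ->
        [/\ iter_ok k, eps < `|g (x k.+1)|
          & tau_admissible (s_ k) (y_ k) (S k.+1) (g (x k.+1)) (tau k.+1)]].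

End SLBFGS.

(* Each operator B_k is uniformly positive definite.  For B_k^(0) = tau_k I + S_k this
   holds because tau_k >= omega^l_k > 0 when c0 > 0 (standing assumption 3 covers c0 = 0),
   and a BFGS update with y^T s > 0 preserves it: writing v = w + t s with w B-orthogonal
   to s gives v^T B' v = w^T B w + (y^T v)^2 / y^T s, which controls |v|^2.  The curvature
   test y^T s > c_s |s|^2 makes every stored pair admissible.  On a Hilbert space such an
   operator is invertible (v |-> v - om (B v - f) is a contraction), so d_k exists and is a
   descent direction.  Backtracking stops because the Armijo inequality holds for all
   small steps; a Wolfe-Powell step is a critical point of a |-> J(x + a d) - J(x) -
   a sigma g^T d at which this function is negative, and one exists because J is bounded
   below.  The Armijo inequality makes J(x_k) strictly decreasing, and being bounded below
   it converges. *)

From HB Require Import structures.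
From mathcomp Require Import all_boot all_order all_algebra.
From mathcomp Require Import all_classical all_reals all_analysis.
From mathcomp Require Import ring lra.
Import Order.TTheory GRing.Theory Num.Theory.
Import numFieldNormedType.Exports.
Local Open Scope classical_set_scope.
Local Open Scope ring_scope.
Set Implicit Arguments. Unset Strict Implicit. Unset Printing Implicit Defensive.

Section LinearMap.
Variables (R : ringType) (U V : lmodType R) (f : U -> V).
Hypothesis f_lin : linear f.

Lemma lin_map0 : f 0 = 0.
Proof.
apply: (addIr (f 0)); rewrite add0r -{1}(scale1r (f 0)) -f_lin.
by rewrite scaler0 addr0.
Qed.

Lemma lin_mapD u v : f (u + v) = f u + f v.
Proof. by rewrite -[u in LHS]scale1r f_lin scale1r. Qed.

Lemma lin_mapZ a u : f (a *: u) = a *: f u.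
Proof. by rewrite -[a *: u]addr0 f_lin lin_map0 addr0. Qed.

Lemma lin_mapN u : f (- u) = - f u.
Proof. by rewrite -scaleN1r lin_mapZ scaleN1r. Qed.

Lemma lin_mapB u v : f (u - v) = f u - f v.
Proof. by rewrite lin_mapD lin_mapN. Qed.

End LinearMap.

Section Safeguard.
Variables (R : realType) (X : normedModType R) (c0 : R) (C0 : \bar R) (c1 c2 : R).

Lemma proj_tau_ge (gn : X) (t : R) :
  ((omega_l c0 c1 c2 gn)%:E <= omega_u C0 c1 c2 gn)%E ->
  omega_l c0 c1 c2 gn <= proj_tau c0 C0 c1 c2 gn t.
Proof.
rewrite /proj_tau; case: (omega_u _ _ _ _) => [u||] //= lu.
  by rewrite -EFin_min /= le_min le_max lexx orbT -lee_fin.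
by rewrite miney /= le_max lexx orbT.
Qed.

Lemma proj_tau_le (gn : X) (t1 t2 : R) : t1 <= t2 ->
  proj_tau c0 C0 c1 c2 gn t1 <= proj_tau c0 C0 c1 c2 gn t2.
Proof.
rewrite /proj_tau => t12.
have max_le : Num.max t1 (omega_l c0 c1 c2 gn) <= Num.max t2 (omega_l c0 c1 c2 gn).
  by rewrite ge_max !le_max t12 lexx orbT.
case: (omega_u _ _ _ _) => [u||] //=; last by rewrite !miney.
by rewrite -!EFin_min /= le_min !ge_min max_le lexx !orbT.
Qed.

Lemma omega_l_le_u (gn : X) : (c0%:E <= C0)%E ->
  ((omega_l c0 c1 c2 gn)%:E <= omega_u C0 c1 c2 gn)%E.
Proof.
move=> c0_C0; apply: le_trans (le_trans _ c0_C0) _; first by rewrite lee_fin ge_min lexx.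
by rewrite le_max lexx.
Qed.

Lemma omega_l_gt0 (gn : X) : 0 < c0 -> 0 < c1 -> gn != 0 -> 0 < omega_l c0 c1 c2 gn.
Proof.
by move=> c0_gt0 c1_gt0 gn_neq0; rewrite lt_min c0_gt0 mulr_gt0 ?powR_gt0 ?normr_gt0.
Qed.

Variable inner : X -> X -> R.

Lemma tau_admissible_ge (s y : X) Sn gn t :
  (c0%:E <= C0)%E -> tau_admissible inner c0 C0 c1 c2 s y Sn gn t ->
  omega_l c0 c1 c2 gn <= t.
Proof.
move=> c0_C0; rewrite /tau_admissible /=.
by case: ifP => _ /andP[proj_le _]; apply: le_trans proj_le; apply/proj_tau_ge/omega_l_le_u.
Qed.
End Safeguard.

Section InnerProduct.
Variables (R : realType) (X : normedModType R) (inner : X -> X -> R).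
Hypothesis HI : is_inner_product inner.

Lemma innerC u v : inner u v = inner v u.
Proof. by case: HI. Qed.

Lemma inner_linl w : linear (inner^~ w : X -> R^o).
Proof. by case: HI => _ h _ a u v; apply: h. Qed.

Lemma inner_linr w : linear (inner w : X -> R^o).
Proof. by move=> a u v; rewrite !(innerC w); apply: inner_linl. Qed.

Lemma inner_self v : inner v v = `|v| ^+ 2.
Proof. by case: HI. Qed.

Lemma innerDl u v w : inner (u + v) w = inner u w + inner v w.
Proof. exact: (lin_mapD (inner_linl w)). Qed.
Lemma innerBl u v w : inner (u - v) w = inner u w - inner v w.
Proof. exact: (lin_mapB (inner_linl w)). Qed.
Lemma innerZl a u w : inner (a *: u) w = a * inner u w.
Proof. exact: (lin_mapZ (inner_linl w)). Qed.
Lemma innerNl u w : inner (- u) w = - inner u w.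
Proof. exact: (lin_mapN (inner_linl w)). Qed.
Lemma inner0l w : inner 0 w = 0.
Proof. exact: (lin_map0 (inner_linl w)). Qed.
Lemma innerDr u v w : inner w (u + v) = inner w u + inner w v.
Proof. exact: (lin_mapD (inner_linr w)). Qed.
Lemma innerBr u v w : inner w (u - v) = inner w u - inner w v.
Proof. exact: (lin_mapB (inner_linr w)). Qed.
Lemma innerZr a u w : inner w (a *: u) = a * inner w u.
Proof. exact: (lin_mapZ (inner_linr w)). Qed.
Lemma innerNr u w : inner w (- u) = - inner w u.
Proof. exact: (lin_mapN (inner_linr w)). Qed.
Lemma inner0r w : inner w 0 = 0.
Proof. exact: (lin_map0 (inner_linr w)). Qed.

Definition innerE := (innerDl, innerBl, innerZl, innerNl, inner0l,
                      innerDr, innerBr, innerZr, innerNr, inner0r).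

Lemma inner_sq_le u v : inner u v ^+ 2 <= `|u| ^+ 2 * `|v| ^+ 2.
Proof.
have [->|v_neq0] := eqVneq v 0; first by rewrite inner0r normr0; lra.
have v2_gt0 : 0 < `|v| ^+ 2 by rewrite exprn_gt0 // normr_gt0.
have : 0 <= `| `|v| ^+ 2 *: u - inner u v *: v| ^+ 2 := sqr_ge0 _.
rewrite -(inner_self (_ - _)) !innerE (innerC v u) !inner_self.
set a := `|v| ^+ 2 in v2_gt0 *; set b := inner u v.
have -> : a * (a * `|u| ^+ 2) - a * (b * b) - (b * (a * b) - b * (b * a))
          = a * (`|u| ^+ 2 * a - b ^+ 2) by ring.
by rewrite pmulr_rge0 // subr_ge0.
Qed.

Lemma normr_inner_le u v : `|inner u v| <= `|u| * `|v|.
Proof.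
rewrite -(ler_pXn2r (n := 2)) ?nnegrE ?mulr_ge0 //.
by rewrite real_normK ?num_real // exprMn inner_sq_le.
Qed.

Lemma spd_inner_gt0 B v : spd_bounded inner B -> v != 0 -> 0 < inner (B v) v.
Proof.
case=> _ [mu [mu_gt0 B_coer]] v_neq0; apply: lt_le_trans (B_coer v).
by rewrite mulr_gt0 // exprn_gt0 // normr_gt0.
Qed.

Lemma spd_scale_add_psd (t : R) (S : X -> X) : 0 < t -> sym_psd_bounded inner S ->
  spd_bounded inner (fun v => t *: v + S v).
Proof.
move=> t_gt0 [S_lin [M S_bd] S_sym S_psd].
have coer v : t * `|v| ^+ 2 <= inner (t *: v + S v) v.
  by rewrite innerDl innerZl inner_self lerDl.
split; last by exists t.
split.
- by move=> a u v; rewrite S_lin !scalerDr scalerA mulrC -scalerA addrACA -scalerDr.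
- exists (`|t| + `|M|) => v; apply: le_trans (ler_normD _ _) _.
  rewrite normrZ mulrDl lerD //; apply: le_trans (S_bd v) _.
  by rewrite ler_wpM2r // ler_norm.
- by move=> u v; rewrite innerDl innerZl innerDr innerZr S_sym (innerC u).
- by move=> v; apply: le_trans (coer v); rewrite mulr_ge0 // ltW.
Qed.

Lemma spd_injective B : spd_bounded inner B -> injective B.
Proof.
case=> -[B_lin _ _ _] [mu [mu_gt0 B_coer]] u v Buv; apply/eqP; rewrite -subr_eq0.
have := B_coer (u - v); rewrite (lin_mapB B_lin) Buv subrr inner0l.
by rewrite pmulr_rle0 // -normr_eq0 -sqrf_eq0 eq_le sqr_ge0 andbT.
Qed.

Section BFGSUpdate.
Variables (B : X -> X) (s y : X).
Hypotheses (B_spd : spd_bounded inner B)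
           (ys_gt0 : 0 < inner y s) (sBs_gt0 : 0 < inner s (B s)).

Local Notation B' := (bfgs_update inner B s y).

Let B_lin : linear B. Proof. by case: B_spd => -[]. Qed.
Let B_sym u v : inner (B u) v = inner u (B v). Proof. by case: B_spd => -[]. Qed.

Lemma bfgs_update_linear : linear B'.
Proof.
move=> a u v; rewrite /bfgs_update B_lin innerDr innerZr innerDr innerZr.
rewrite !mulrDl !scalerDl !scalerDr !scalerN !scalerA !mulrA.
by rewrite addrACA opprD [LHS]addrACA.
Qed.

Lemma bfgs_update_sym u v : inner (B' u) v = inner u (B' v).
Proof.
rewrite /bfgs_update !innerE B_sym (B_sym s v) (innerC u y) (innerC u (B s)).
by rewrite (B_sym s u); ring.
Qed.

Lemma bfgs_update_bounded : exists M, forall v, `|B' v| <= M * `|v|.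
Proof.
case: B_spd => -[_ [M B_bd] _ _] _.
have B_bd' u : `|B u| <= `|M| * `|u|.
  by apply: le_trans (B_bd u) _; rewrite ler_wpM2r // ler_norm.
exists (`|M| + `|y| ^+ 2 / inner y s + `|M| ^+ 2 * `|s| ^+ 2 / inner s (B s)) => v.
rewrite /bfgs_update; apply: le_trans (ler_normB _ _) _.
apply: le_trans (lerD (ler_normD _ _) (lexx _)) _.
rewrite !normrZ !normfV (gtr0_norm ys_gt0) (gtr0_norm sBs_gt0) !mulrDl.
rewrite lerD ?B_bd' // ?lerD ?B_bd' //.
  rewrite mulrAC [leRHS]mulrAC ler_pM2r ?invr_gt0 // expr2 mulrAC.
  exact: ler_wpM2r (normr_inner_le y v).
rewrite mulrAC [leRHS]mulrAC ler_pM2r ?invr_gt0 //.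
have sBv_le := le_trans (normr_inner_le s (B v)) (ler_wpM2l (normr_ge0 s) (B_bd' v)).
apply: le_trans (ler_pM _ _ sBv_le (B_bd' s)) _ => //.
by rewrite (_ : _ * _ * _ = `|M| ^+ 2 * `|s| ^+ 2 * `|v|) ?lexx //; ring.
Qed.

Let proj v := v - (inner s (B v) / inner s (B s)) *: s.

Lemma bfgs_update_quad v :
  inner (B' v) v = inner (B (proj v)) (proj v) + inner y v ^+ 2 / inner y s.
Proof.
rewrite /bfgs_update /proj (lin_mapB B_lin) (lin_mapZ B_lin) !innerE.
rewrite (B_sym s v) (innerC (B v) s) (innerC (B s) s).
by field; rewrite !gt_eqF.
Qed.

Lemma norm_le_proj v :
  `|v| <= (1 + `|s| * `|y| / inner y s) * `|proj v| + `|s| / inner y s * `|inner y v|.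
Proof.
set t := inner s (B v) / inner s (B s).
have v_split : v = proj v + t *: s by rewrite /proj subrK.
have t_le : `|t| * inner y s <= `|inner y v| + `|y| * `|proj v|.
  have -> : `|t| * inner y s = `|inner y v - inner y (proj v)|.
    by rewrite {1}v_split innerDr innerZr addrC addKr [RHS]normrM (gtr0_norm ys_gt0).
  by apply: le_trans (ler_normB _ _) _; rewrite lerD // normr_inner_le.
rewrite {1}v_split; apply: le_trans (ler_normD _ _) _; rewrite normrZ.
have -> : `|t| * `|s| = `|t| * inner y s * (`|s| / inner y s) by field; rewrite gt_eqF.
have k_ge0 : 0 <= `|s| / inner y s by rewrite divr_ge0 // ltW.
apply: le_trans (lerD (lexx _) (ler_wpM2r k_ge0 t_le)) _.
by rewrite le_eqVlt; apply/orP; left; apply/eqP; field; rewrite gt_eqF.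
Qed.

Lemma bfgs_update_coercive :
  exists2 mu, 0 < mu & forall v, mu * `|v| ^+ 2 <= inner (B' v) v.
Proof.
case: B_spd => _ [mu [mu_gt0 B_coer]].
set A : R := 1 + `|s| * `|y| / inner y s; set C : R := `|s| / inner y s.
set K : R := 2 * A ^+ 2 / mu + 2 * C ^+ 2 * inner y s.
have A_ge1 : 1 <= A by rewrite lerDl divr_ge0 ?mulr_ge0 // ltW.
have K_gt0 : 0 < K.
  have : 0 < 2 * A ^+ 2 / mu.
    by rewrite divr_gt0 // mulr_gt0 // exprn_gt0 // (lt_le_trans ltr01).
  have : 0 <= 2 * C ^+ 2 * inner y s by rewrite (mulr_ge0 (mulr_ge0 _ (sqr_ge0 C))) // ltW.
  rewrite /K; lra.
exists K^-1 => [|v]; first by rewrite invr_gt0.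
rewrite ler_pdivrMl //.
have Q_ge := B_coer (proj v); have P_eq := bfgs_update_quad v.
set p : R := `|proj v| in Q_ge *; set q : R := `|inner y v|.
set P : R := inner (B' v) v in P_eq *.
have Q_ge0 : 0 <= inner (B (proj v)) (proj v).
  by apply: le_trans Q_ge; rewrite mulr_ge0 ?sqr_ge0 ?ltW.
have r_ge0 : 0 <= inner y v ^+ 2 / inner y s by rewrite divr_ge0 ?sqr_ge0 // ltW.
have p2_le : p ^+ 2 <= P / mu.
  by rewrite ler_pdivlMr // mulrC (le_trans Q_ge) // P_eq lerDl.
have q2_le : q ^+ 2 <= inner y s * P.
  by rewrite real_normK ?num_real // -ler_pdivrMl // mulrC P_eq lerDr.
have v2_le : `|v| ^+ 2 <= 2 * A ^+ 2 * p ^+ 2 + 2 * C ^+ 2 * q ^+ 2.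
  have := norm_le_proj v; rewrite -/A -/C -/p -/q => v_le.
  have C_ge0 : 0 <= C by rewrite divr_ge0 // ltW.
  apply: le_trans (_ : (A * p + C * q) ^+ 2 <= _).
    have A_ge0 : 0 <= A := le_trans ler01 A_ge1.
    have m_ge0 := addr_ge0 (mulr_ge0 A_ge0 (normr_ge0 (proj v)))
                           (mulr_ge0 C_ge0 (normr_ge0 (inner y v))).
    by rewrite ler_pXn2r ?nnegrE.
  rewrite -subr_ge0 (_ : _ - _ = (A * p - C * q) ^+ 2) ?sqr_ge0 //; ring.
apply: le_trans v2_le _; rewrite /K (mulrDl (2 * A ^+ 2 / mu)); apply: lerD.
  rewrite [leRHS]mulrAC -[leRHS]mulrA.
  by apply: ler_wpM2l p2_le; rewrite mulr_ge0 ?sqr_ge0.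
by rewrite -[leRHS]mulrA; apply: ler_wpM2l q2_le; rewrite mulr_ge0 ?sqr_ge0.
Qed.

Lemma spd_bfgs_update : spd_bounded inner B'.
Proof.
have [mu mu_gt0 coer] := bfgs_update_coercive.
split; last by exists mu.
split; [exact: bfgs_update_linear | exact: bfgs_update_bounded
       | exact: bfgs_update_sym | ].
by move=> v; apply: le_trans (coer v); rewrite mulr_ge0 ?sqr_ge0 ?ltW.
Qed.

End BFGSUpdate.

Lemma apply_updates_spd l B : spd_bounded inner B ->
  all (fun p => 0 < inner p.2 p.1) l ->
  chain_ok inner B l /\ spd_bounded inner (apply_updates inner B l).
Proof.
elim: l B => [|[s y] l IH] B B_spd //= /andP[ys_gt0 l_curv].
have s_neq0 : s != 0 by apply: contraTneq ys_gt0 => ->; rewrite inner0r ltxx.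
have sBs_gt0 : 0 < inner s (B s) by rewrite innerC spd_inner_gt0.
by case: (IH _ (spd_bfgs_update B_spd ys_gt0 sBs_gt0) l_curv).
Qed.

Lemma tau_admissible_exists c0 C0 c1 c2 (s y : X) Sn gn :
  exists t, tau_admissible inner c0 C0 c1 c2 s y Sn gn t.
Proof.
set z := y - Sn s; set rho := inner z s.
exists (proj_tau c0 C0 c1 c2 gn (rho / `|s| ^+ 2)).
rewrite /tau_admissible /= -/z -/rho.
have [s0|s_neq0] := eqVneq s 0.
  have -> : rho = 0 by rewrite /rho s0 inner0r.
  by rewrite ltxx lexx /= s0 normr0 !mul0r invr0 !mulr0 lexx.
have s_gt0 : 0 < `|s| by rewrite normr_gt0.
have s2_gt0 : 0 < `|s| ^+ 2 by rewrite exprn_gt0.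
case: ifP => rho_gt0; rewrite lexx /=; apply: proj_tau_le.
  rewrite ler_pdivrMr // mulrAC ler_pdivlMr // -expr2.
  exact: le_trans (inner_sq_le z s) _.
rewrite ler_pdivrMr // (_ : `|z| / `|s| * `|s| ^+ 2 = `|z| * `|s|); last first.
  by field; rewrite gt_eqF.
exact: le_trans (ler_norm _) (normr_inner_le z s).
Qed.

End InnerProduct.

Section Invertibility.
Variables (R : realType) (X : completeNormedModType R) (inner : X -> X -> R).
Hypothesis HI : is_inner_product inner.

Lemma spd_contraction B : spd_bounded inner B ->
  exists2 om : R, 0 < om &
  exists2 k : R, 0 <= k < 1 & forall w, `|w - om *: B w| <= k * `|w|.
Proof.
case=> -[_ [M B_bd] _ _] [mu [mu_gt0 B_coer]].
set M1 := `|M| + mu; set om := mu / M1 ^+ 2.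
have M1_ge : mu <= M1 by rewrite lerDr.
have M1_gt0 : 0 < M1 := lt_le_trans mu_gt0 M1_ge.
have B_bd' v : `|B v| <= M1 * `|v|.
  by apply: le_trans (B_bd v) _; rewrite ler_wpM2r // (le_trans (ler_norm M)) ?lerDl ?ltW.
(* This step size gives |w - om B w|^2 <= (1 - om mu) |w|^2. *)
have om_gt0 : 0 < om by rewrite divr_gt0 // exprn_gt0.
have omM1 : om * M1 ^+ 2 = mu by rewrite divfK // gt_eqF // exprn_gt0.
have ommu_le1 : om * mu <= 1.
  rewrite mulrAC ler_pdivrMr ?exprn_gt0 // mul1r -expr2.
  by rewrite ler_pXn2r ?nnegrE ?(ltW mu_gt0) ?(ltW M1_gt0).
have ommu_gt0 := mulr_gt0 om_gt0 mu_gt0.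
exists om => //; exists (1 - om * mu / 2); first by apply/andP; split; lra.
move=> w; rewrite -(ler_pXn2r (n := 2)) ?nnegrE ?mulr_ge0 //; last by lra.
have sq : `|w - om *: B w| ^+ 2 <= (1 - om * mu) * `|w| ^+ 2.
  rewrite -(inner_self HI) !(innerE HI) (innerC HI w (B w)) !(inner_self HI).
  have h1 := ler_wpM2l (ltW om_gt0) (B_coer w).
  have : `|B w| ^+ 2 <= M1 ^+ 2 * `|w| ^+ 2.
    by rewrite -exprMn ler_pXn2r ?nnegrE ?mulr_ge0 ?(ltW M1_gt0) ?B_bd'.
  move=> /(ler_wpM2l (ltW (mulr_gt0 om_gt0 om_gt0))).
  have -> : om * om * (M1 ^+ 2 * `|w| ^+ 2) = om * mu * `|w| ^+ 2.
    by rewrite -omM1; ring.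
  lra.
apply: le_trans sq _; rewrite exprMn ler_wpM2r ?sqr_ge0 //.
have -> : (1 - om * mu / 2) ^+ 2 = 1 - om * mu + (om * mu / 2) ^+ 2 by field.
by rewrite lerDl sqr_ge0.
Qed.

Lemma contraction_has_fixed_point (T : X -> X) (k : R) : 0 <= k < 1 ->
  (forall u v, `|T u - T v| <= k * `|u - v|) -> exists p, T p = p.
Proof.
case/andP=> k_ge0 k_lt1 T_lip.
have T_ctr : is_contraction (totalfun T).
  by exists (NngNum k_ge0); split => //= -[u v] _; exact: T_lip.
have [p _ Tp] := banach_fixed_point T_ctr closedT (ex_intro _ 0 I).
by exists p; rewrite [RHS]Tp.
Qed.

Lemma spd_bijective B : spd_bounded inner B -> bijective B.
Proof.
move=> B_spd; have [[B_lin _ _ _] _] := B_spd.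
have [om om_gt0 [k k01 B_ctr]] := spd_contraction B_spd.
have surj f : exists p, B p = f.
  pose T v := v - om *: B v + om *: f.
  have [|p Tp] := @contraction_has_fixed_point T k k01.
    move=> u v; rewrite (_ : T u - T v = (u - v) - om *: B (u - v)) ?B_ctr //.
    rewrite /T [v - _ + _]addrC addrKA (lin_mapB B_lin) scalerBr !opprB.
    by rewrite addrACA [RHS]addrACA [- _ + - _]addrC.
  exists p; apply/eqP; move: Tp; rewrite /T => /eqP.
  rewrite -addrA -[X in _ == X]addr0 (inj_eq (addrI p)) addrC -scalerBr scaler_eq0.
  by rewrite (gt_eqF om_gt0) subr_eq0 eq_sym.
have [h hK] := choice surj.
by exists h => // v; apply: (spd_injective HI B_spd); rewrite hK.
Qed.
End Invertibility.

Lemma exists_neg_critical_point (R : realType) (phi : R -> R) (a A : R) :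
  (forall t, derivable phi t 1) -> phi 0 = 0 -> 0 < a -> a <= A ->
  phi a < 0 -> 0 < phi A -> exists c, [/\ 0 < c, phi c < 0 & is_derive c 1 phi 0].
Proof.
move=> phi_der phi0 a_gt0 aA phia phiA.
have A_ge0 : 0 <= A by rewrite (le_trans (ltW a_gt0)).
have phi_cont : {within `[0, A], continuous phi}.
  by apply: derivable_within_continuous => t _; exact: phi_der.
have [c cA c_min] := EVT_min A_ge0 phi_cont.
have phic : phi c < 0.
  by apply: le_lt_trans phia; apply: c_min; rewrite in_itv /= aA ltW.
have c_neq0 : c != 0 by apply: contraTneq phic => ->; rewrite phi0 ltxx.
have c_neqA : c != A by apply: contraTneq phic => ->; rewrite -leNgt ltW.
have c_in : c \in `]0, A[.
  by move: cA; rewrite !in_itv /= !lt_neqAle c_neqA eq_sym c_neq0.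
exists c; split => //; first by move: c_in; rewrite in_itv => /andP[].
apply: (derive1_at_min A_ge0 (fun t _ => phi_der t) c_in) => t t_in.
exact/c_min/subset_itv_oo_cc.
Qed.

Section LineSearch.
Variables (R : realType) (X : normedModType R) (inner : X -> X -> R).
Variables (J : X -> R) (g : X -> X).
Hypothesis HJ : is_C1_with_gradient inner J g.

Lemma is_derive_along (x d : X) (t : R) :
  is_derive t 1 (fun a : R => J (x + a *: d)) (inner (g (x + t *: d)) d).
Proof.
have [dJ dJE] := HJ.1 (x + t *: d).
have quotE : (fun e : R => e^-1 *: (J (x + (e *: 1 + t) *: d) - J (x + t *: d)))
           = (fun e : R => e^-1 *: (J (e *: d + (x + t *: d)) - J (x + t *: d))).
  by apply/funext => e; rewrite [e *: 1]mulr1 scalerDl addrCA addrC.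
have J_der : derivable J (x + t *: d) d := diff_derivable dJ.
split; first by rewrite /derivable /= quotE.
by rewrite /derive /= quotE -/(derive J (x + t *: d) d) deriveE // dJE.
Qed.

Lemma armijo_near0 (x d : X) (sigma : R) : sigma < 1 -> inner (g x) d < 0 ->
  exists2 del : R, 0 < del & forall a, 0 < a -> a < del ->
    J (x + a *: d) < J x + a * sigma * inner (g x) d.
Proof.
move=> sigma_lt1 descent.
have slope := is_derive_along x d 0.
have := @ex_derive _ _ _ _ _ _ _ slope; rewrite /derivable.
have := derive_val (is_derive := slope); rewrite /derive => ->.
rewrite scale0r addr0 => quot_cvg.
have /(cvgr_lt _ quot_cvg) : inner (g x) d < sigma * inner (g x) d by nra.
case=> del /= del_gt0 near_quot; exists del => // a a_gt0 a_lt.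
have : ball_ Num.Def.normr 0 del a by rewrite /ball_ /= sub0r normrN gtr0_norm.
move=> /near_quot /(_ (lt0r_neq0 a_gt0)).
rewrite [a%:A]mulr1 addr0 -[_ *: _]/(_ * _) ltr_pdivrMl // => h.
by rewrite -ltrBlDl -mulrA.
Qed.

Lemma wolfe_powell_step_exists (x d : X) (sigma eta lb : R) :
  (forall v, lb <= J v) -> 0 < sigma -> sigma < eta -> eta < 1 ->
  inner (g x) d < 0 ->
  exists a, ls_ok inner J g (WolfePowell sigma eta) x d a.
Proof.
move=> J_lb sigma_gt0 sigma_eta eta_lt1 descent.
set m := inner (g x) d in descent *; set q := - (sigma * m).
have q_gt0 : 0 < q by rewrite oppr_gt0 pmulr_rlt0.
pose phi := (fun a : R => J (x + a *: d)) - cst (J x) + q \*: id.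
have phiE a : phi a = J (x + a *: d) - J x + a * q by rewrite /phi /= mulrC.
have phi_der (t : R) : is_derive t (1 : R) phi (inner (g (x + t *: d)) d - 0 + q *: 1).
  by apply: is_deriveD; first apply: is_deriveB; first exact: is_derive_along.
have [del del_gt0 near0] := armijo_near0 (lt_trans sigma_eta eta_lt1) descent.
set a0 := del / 2; set A := a0 + (J x - lb) / q + 1.
have a0_gt0 : 0 < a0 by rewrite divr_gt0.
have phi_a0 : phi a0 < 0.
  have a0_lt : a0 < del by rewrite /a0; lra.
  have := near0 a0 a0_gt0 a0_lt; rewrite phiE /q /m mulrN mulrA; lra.
have JxA_ge : 0 <= (J x - lb) / q by rewrite divr_ge0 ?subr_ge0 ?J_lb ?(ltW q_gt0).
have phi_A : 0 < phi A.
  have Aq : A * q = a0 * q + (J x - lb) + q by rewrite /A; field; rewrite gt_eqF.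
  have := J_lb (x + A *: d); have := mulr_gt0 a0_gt0 q_gt0; rewrite phiE Aq; lra.
have phi0 : phi 0 = 0 by rewrite phiE scale0r addr0 mul0r subrr addr0.
have a0A : a0 <= A by rewrite /A; lra.
have [c [c_gt0 phi_c crit]] := exists_neg_critical_point
  (fun t => @ex_derive _ _ _ _ _ _ _ (phi_der t)) phi0 a0_gt0 a0A phi_a0 phi_A.
have slope_c : inner (g (x + c *: d)) d = sigma * m.
  have := derive_val (is_derive := crit); rewrite (derive_val (is_derive := phi_der c)).
  by rewrite subr0 [q *: 1]mulr1 /q => /eqP; rewrite addr_eq0 opprK => /eqP.
exists c; split => //; split.
  by move: phi_c; rewrite phiE /armijo /q /m mulrN mulrA; lra.
by rewrite slope_c ler_nM2r // ltW.
Qed.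

Lemma armijo_backtracking_step_exists (x d : X) (beta sigma : R) :
  0 < beta < 1 -> sigma < 1 -> inner (g x) d < 0 ->
  exists a, ls_ok inner J g (ArmijoBacktracking beta sigma) x d a.
Proof.
case/andP=> beta_gt0 beta_lt1 sigma_lt1 descent.
have [del del_gt0 near0] := armijo_near0 sigma_lt1 descent.
have [i beta_i_lt] : exists i : nat, beta ^+ i < del.
  have /cvg_expr/(cvgr_lt _)/(_ del del_gt0)[N _ beta_lt] : `|beta| < 1.
    by rewrite gtr0_norm.
  by exists N; apply: beta_lt => /=.
pose P i := J (x + beta ^+ i *: d) <= J x + beta ^+ i * sigma * inner (g x) d.
have P_i : exists i, P i by exists i; apply/ltW/near0; rewrite ?exprn_gt0.
have [i0 P_i0 i0_min] := ex_minnP P_i.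
exists (beta ^+ i0), i0; split => //; split => // j j_lt P_j.
by move: (i0_min j P_j); rewrite leqNgt j_lt.
Qed.

Lemma ls_step_exists ls (x d : X) (lb : R) :
  ls_params_ok ls -> (forall v, lb <= J v) -> inner (g x) d < 0 ->
  exists a, ls_ok inner J g ls x d a.
Proof.
case: ls => [beta sigma | sigma eta] /=.
  case=> beta01 /andP[_ sigma_lt1] _ descent.
  exact: armijo_backtracking_step_exists.
case=> sigma_gt0 [sigma_eta eta_lt1] J_lb descent.
exact: wolfe_powell_step_exists J_lb sigma_gt0 sigma_eta eta_lt1 descent.
Qed.

Lemma ls_step_decrease ls (x d : X) (a : R) :
  ls_params_ok ls -> inner (g x) d < 0 -> ls_ok inner J g ls x d a ->
  0 < a /\ J (x + a *: d) < J x.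
Proof.
move=> ls_ok_params descent ls_step.
have [a_gt0 [sigma [sigma_gt0 arm]]] :
    0 < a /\ exists sigma, 0 < sigma /\ armijo inner J g sigma x d a.
  case: ls ls_ok_params ls_step => [beta sigma | sigma eta] /= [beta01 sigma01].
    case=> i [-> [arm _]]; split; first by rewrite exprn_gt0; case/andP: beta01.
    by exists sigma; split => //; case/andP: sigma01.
  by case=> a_gt0 [arm _]; split => //; exists sigma.
split => //; apply: le_lt_trans arm _.
by rewrite gtrDl pmulr_rlt0 ?mulr_gt0.
Qed.
End LineSearch.

Section Run.
Variables (R : realType) (X : completeNormedModType R) (inner : X -> X -> R).
Variables (J : X -> R) (g : X -> X) (lb eps : R) (ell : nat).
Variables (c0 : R) (C0 : \bar R) (cs c1 c2 : R) (ls : line_search R).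
Variables (x : nat -> X) (S : nat -> X -> X) (tau alpha : nat -> R) (d : nat -> X).
Hypotheses (HI : is_inner_product inner) (HJ : is_C1_with_gradient inner J g)
           (J_lb : forall v, lb <= J v) (eps_ge0 : 0 <= eps).
Hypotheses (c0_ge0 : 0 <= c0) (c0_C0 : (c0%:E <= C0)%E) (cs_gt0 : 0 < cs) (c1_gt0 : 0 < c1).
Hypotheses (ls_params : ls_params_ok ls) (gx0_neq0 : g (x 0) != 0).

Local Notation run_prefix := (run_prefix inner J g eps ell c0 C0 cs c1 c2 ls x S tau alpha d).
Local Notation B_ := (B_ inner g ell cs x S tau).

Hypothesis B0_spd_c0 : c0 = 0 -> forall N, run_prefix N -> spd_bounded inner (B0_ S tau N).

Lemma run_prefix_grad_neq0 N : run_prefix N -> g (x N) != 0.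
Proof.
case: N => [|k] [_ _ iters] //; have [_ eps_lt _] := iters k (ltnSn k).
by rewrite -normr_gt0 (le_lt_trans eps_ge0).
Qed.

Lemma run_prefix_B0_spd N : run_prefix N -> spd_bounded inner (B0_ S tau N).
Proof.
move=> run; have [tau0_gt0 S_psd iters] := run.
have [c0_eq0|c0_neq0] := eqVneq c0 0; first exact: B0_spd_c0.
have c0_gt0 : 0 < c0 by rewrite lt0r c0_neq0.
have tauN_gt0 : 0 < tau N.
  case: N run S_psd iters => [|k] run _ iters //; have [_ _ tau_adm] := iters k (ltnSn k).
  apply: lt_le_trans (tau_admissible_ge c0_C0 tau_adm).
  exact: omega_l_gt0 c0_gt0 c1_gt0 (run_prefix_grad_neq0 run).
rewrite /B0_; apply: (spd_scale_add_psd HI tauN_gt0); exact: S_psd.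
Qed.

Lemma run_prefix_B_spd N : run_prefix N ->
  chain_ok inner (B0_ S tau N) (stored_pairs inner g ell cs x N) /\
  spd_bounded inner (B_ N).
Proof.
move=> run; apply: (apply_updates_spd HI (run_prefix_B0_spd run)).
rewrite /stored_pairs all_map; apply/allP => j; rewrite mem_filter => /andP[curv _] /=.
exact: le_lt_trans (mulr_ge0 (ltW cs_gt0) (sqr_ge0 _)) curv.
Qed.

Lemma run_prefix_descent N dN : run_prefix N -> B_ N dN = - g (x N) ->
  dN != 0 /\ inner (g (x N)) dN < 0.
Proof.
move=> run B_dN; have [_ B_spd] := run_prefix_B_spd run.
have [[B_lin _ _ _] _] := B_spd.
have dN_neq0 : dN != 0.
  apply: contraNneq (run_prefix_grad_neq0 run) => dN0.
  by rewrite -oppr_eq0 -B_dN dN0 (lin_map0 B_lin).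
split => //; rewrite -[g (x N)]opprK -B_dN (innerNl HI) oppr_lt0.
exact: spd_inner_gt0 B_spd dN_neq0.
Qed.

Lemma run_prefix_well_defined N : run_prefix N ->
  [/\ chain_ok inner (B0_ S tau N) (stored_pairs inner g ell cs x N),
      spd_bounded inner (B_ N), bijective (B_ N)
    & forall dN, B_ N dN = - g (x N) ->
        (exists a, ls_ok inner J g ls (x N) dN a) /\
        forall a, ls_ok inner J g ls (x N) dN a ->
          a *: dN != 0 /\
          forall Snext, sym_psd_bounded inner Snext ->
            eps < `|g (x N + a *: dN)| ->
            exists t, tau_admissible inner c0 C0 c1 c2 (a *: dN)
                        (g (x N + a *: dN) - g (x N)) Snext (g (x N + a *: dN)) t].
Proof.
move=> run; have [chain B_spd] := run_prefix_B_spd run.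
split => // [|dN B_dN]; first exact: spd_bijective B_spd.
have [dN_neq0 descent] := run_prefix_descent run B_dN.
split; first exact: ls_step_exists ls_params J_lb descent.
move=> a ls_a; have [a_gt0 _] := ls_step_decrease ls_params descent ls_a.
split; first by rewrite scaler_eq0 negb_or dN_neq0 andbT gt_eqF.
by move=> Snext _ _; exact: (tau_admissible_exists HI c0).
Qed.

Lemma run_prefix_decrease k : run_prefix k ->
  iter_ok inner J g ell cs ls x S tau alpha d k -> J (x k.+1) < J (x k).
Proof.
move=> run [B_dk ls_k ->]; have [_ descent] := run_prefix_descent run B_dk.
by have [] := ls_step_decrease ls_params descent ls_k.
Qed.

Lemma run_values_cvg : (forall k, run_prefix k) -> cvgn (fun k => J (x k)).
Proof.
move=> run; apply: nonincreasing_is_cvgn; last by exists lb => _ [k _ <-].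
apply/nonincreasing_seqP => k; apply/ltW/run_prefix_decrease => //.
by have [_ _ iters] := run k.+1; have [] := iters k (ltnSn k).
Qed.
End Run.

Theorem lemma4p3 (R : realType) (X : completeNormedModType R)
  (inner : X -> X -> R) (J : X -> R) (g : X -> X)
  (x0 : X) (eps : R) (ell : nat) (c0 : R) (C0 : \bar R) (cs c1 c2 : R)
  (ls : line_search R) :
  is_inner_product inner ->
  is_C1_with_gradient inner J g ->
  (exists m : R, forall v, m <= J v) ->
  0 <= eps -> 0 <= c0 -> (c0%:E <= C0)%E -> 0 < cs -> 0 < c1 -> 0 < c2 ->
  ls_params_ok ls ->
  g x0 != 0 ->
  forall (x : nat -> X) (Sop : nat -> X -> X) (tau alpha : nat -> R)
         (d : nat -> X),
  x 0%N = x0 ->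
  (* standing assumption 3 *)
  (c0 = 0 -> forall N, run_prefix inner J g eps ell c0 C0 cs c1 c2 ls x Sop tau alpha d N ->
     spd_bounded inner (B0_ Sop tau N)) ->
  (* well-definedness *)
  (forall N, run_prefix inner J g eps ell c0 C0 cs c1 c2 ls x Sop tau alpha d N ->
     [/\ chain_ok inner (B0_ Sop tau N) (stored_pairs inner g ell cs x N),
         spd_bounded inner (B_ inner g ell cs x Sop tau N),
         bijective (B_ inner g ell cs x Sop tau N)
       & forall dN, B_ inner g ell cs x Sop tau N dN = - g (x N) ->
           (exists a, ls_ok inner J g ls (x N) dN a) /\
           forall a, ls_ok inner J g ls (x N) dN a ->
             a *: dN != 0 /\
             forall Snext, sym_psd_bounded inner Snext ->
               eps < `|g (x N + a *: dN)| ->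
               exists t, tau_admissible inner c0 C0 c1 c2 (a *: dN)
                           (g (x N + a *: dN) - g (x N)) Snext
                           (g (x N + a *: dN)) t]) /\
  (* strict monotone decrease along every executed iteration *)
  (forall k, run_prefix inner J g eps ell c0 C0 cs c1 c2 ls x Sop tau alpha d k ->
     iter_ok inner J g ell cs ls x Sop tau alpha d k -> J (x k.+1) < J (x k)) /\
  (* convergence of (J(x_k)) if the algorithm does not stop *)
  ((forall k, run_prefix inner J g eps ell c0 C0 cs c1 c2 ls x Sop tau alpha d k) ->
     cvgn (fun k => J (x k))).
Proof.
move=> HI HJ [lb J_lb] eps_ge0 c0_ge0 c0_C0 cs_gt0 c1_gt0 _ ls_params gx0_neq0.
move=> x S tau alpha d x_0 B0_spd_c0; subst x0.
split; [|split].
- by move=> N; apply: run_prefix_well_defined.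
- by move=> k; apply: run_prefix_decrease.
- by apply: run_values_cvg.
Qed.
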